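(* The class $\mathrm{CEsp}$ is closed under the Cartesian (Hadamard) product: for nonnegative integers $a_\mu,b_\mu$ ($\mu\vdash n$), $$\Big(\sum_{\mu\vdash n}a_\mu\mathbf{C}_\mu\Big)\times\Big(\sum_{\mu\vdash n}b_\mu\mathbf{C}_\mu\Big)=\sum_{\mu\vdash n}\Big(\sum_{\alpha,\beta\vdash n}a_\alpha b_\beta\, b^\mu_{\alpha,\beta}\Big)\mathbf{C}_\mu,$$ with $b^\mu_{\alpha,\beta}\in\mathbb{N}$, so the product is again a nonnegative integer combination of the $\mathbf{C}_\mu$.
   Context: $\mathrm{CEsp}$ is the category whose objects are species $\sum_{\mu\vdash n}a_\mu\mathbf{C}_\mu$ with $a_\mu\in\mathbb{N}$ (disjoint unions of copies) and whose morphisms are natural transformations. $\mathbf{C}_\mu=X^n/\langle\sigma_\mu\rangle$, where $(X^n/H)[U]=\{\lambda H:\lambda:[n]\to U\text{ bijection}\}$ and $\sigma_\mu$ is the standard permutation of cycle type $\mu$ (cycles filled with $1,\ldots,n$ in increasing order). $(F\times G)[U]=F[U]\times G[U]$. $b^\mu_{\alpha,\beta}$ is the number of double cosets $\langle\sigma_\alpha\rangle\pi\langle\sigma_\beta\rangle$ in $S_n$ with $\langle\sigma_\alpha\rangle\cap\pi\langle\sigma_\beta\rangle\pi^{-1}$ conjugate to $\langle\sigma_\mu\rangle$; equivalently the coefficient of $\mathbf{C}_\mu(\mathbf{z})$ in the Kronecker product $\mathbf{C}_\alpha(\mathbf{z})\star\mathbf{C}_\beta(\mathbf{z})$ of cycle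 index series. *)

From mathcomp Require Import all_boot all_order all_fingroup.
From mathcomp Require Import zify.

Set Implicit Arguments.
Unset Strict Implicit.
Unset Printing Implicit Defensive.

(* Integer partitions of n.  A partition mu |- n is encoded as its list of   *)
(* parts in nonincreasing order, padded with zeros to length n (a partition  *)
(* of n has at most n parts, each at most n).                                *)
Definition partn_pred (n : nat) (t : n.-tuple 'I_n.+1) : bool :=
  sorted (fun x y : nat => y <= x) (map val t) && (sumn (map val t) == n).

Definition intpartn (n : nat) := {t : n.-tuple 'I_n.+1 | partn_pred t}.

Definition parts n (mu : intpartn n) : seq nat := [seq x <- map val (val mu) | 0 < x].

(* The standard permutation sigma_mu of cycle type mu: points are           *)
(* 0, ..., n-1 (for 1, ..., n); the j-th cycle is                           *)
(* (c_j  c_j+1  ...  c_j+mu_j-1) with c_j = mu_1 + ... + mu_(j-1).           *)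
Definition rot_nat (n c p i : nat) : nat :=
  if [&& c <= i, i < c + p & c + p <= n] then c + (i - c).+1 %% p else i.

Lemma rot_nat_lt n c p (i : 'I_n) : rot_nat n c p i < n.
Proof.
rewrite /rot_nat; case: ifP => [/and3P [h1 h2 h3]|_]; last exact: ltn_ord.
have hp : 0 < p by lia.
have := ltn_pmod (i - c).+1 hp; lia.
Qed.

Definition rot_fun n c p (i : 'I_n) : 'I_n := Ordinal (rot_nat_lt c p i).

Lemma rot_fun_inj n c p : injective (@rot_fun n c p).
Proof.
move=> i j /(congr1 val); rewrite /= /rot_nat => e; apply: val_inj => /=.
move: e; case: ifP => [/and3P [h1 h2 h3]|/negbT hi];
  case: ifP => [/and3P [k1 k2 k3]|/negbT hj] //.
- have hp : 0 < p by lia.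
  have a1 := ltn_pmod (i - c).+1 hp; have a2 := ltn_pmod (j - c).+1 hp.
  case: (ltngtP (i - c).+1 p) => q1; case: (ltngtP (j - c).+1 p) => q2;
    rewrite ?(modn_small q1) ?(modn_small q2) ?q1 ?q2 ?modnn; lia.
- have hp : 0 < p by lia.
  have a1 := ltn_pmod (i - c).+1 hp; move=> e; move: hj; rewrite -e; lia.
- have hp : 0 < p by lia.
  have a1 := ltn_pmod (j - c).+1 hp; move=> e; move: hi; rewrite e; lia.
Qed.

Definition rot_perm n c p : {perm 'I_n} := perm (@rot_fun_inj n c p).

Definition sigma_std n (mu : intpartn n) : {perm 'I_n} :=
  (\prod_(j < size (parts mu))
     rot_perm n (sumn (take j (parts mu))) (nth 0 (parts mu) j))%g.

Definition Hcyc n (mu : intpartn n) : {group {perm 'I_n}} := <[sigma_std mu]>%G.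

(* b^mu_{alpha,beta}: number of double cosets <s_a> pi <s_b> in S_n with    *)
(* <s_a> :&: pi <s_b> pi^-1 conjugate to <s_mu>.  (The condition only       *)
(* depends on the double coset of pi.)                                      *)
Definition dcoset_cond n (al be mu : intpartn n) (pi : {perm 'I_n}) : bool :=
  [exists g : {perm 'I_n},
     ((Hcyc al :&: (pi *: Hcyc be :* pi^-1)) :^ g)%g == Hcyc mu :> {set _}].

Definition bcoef n (al be mu : intpartn n) : nat :=
  #|[set (Hcyc al :* pi * Hcyc be)%g | pi in [set pi | dcoset_cond al be mu pi]]|.

(* The species  sum_mu a_mu C_mu,  C_mu = X^n / <sigma_mu>.                 *)
(* (X^n/H)[U] = { lambda H : lambda : [n] -> U bijection }, where           *)
(* lambda H = { lambda o h : h in H }.                                       *)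
Section Species.
Variable n : nat.

Definition is_coset (U : finType) (mu : intpartn n) (S : {set {ffun 'I_n -> U}}) : bool :=
  [exists lam : {ffun 'I_n -> U},
     [&& injectiveb lam, #|U| == n &
         S == [set [ffun i => lam ((h : {perm 'I_n}) i)] | h in Hcyc mu]]].

(* sum_mu a_mu C_mu [U] : triples (mu, copy index i < a_mu, element of C_mu[U]) *)
Definition CE_pred (a : intpartn n -> nat) (U : finType)
  (x : intpartn n * nat * {set {ffun 'I_n -> U}}) : bool :=
  (x.1.2 < a x.1.1) && is_coset x.1.1 x.2.

Definition CE (a : intpartn n -> nat) (U : finType) : Type :=
  {x : intpartn n * nat * {set {ffun 'I_n -> U}} | CE_pred a x}.

Definition map_cosets (U V : finType) (f : U -> V) (S : {set {ffun 'I_n -> U}})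
  : {set {ffun 'I_n -> V}} := [set [ffun i => f ((g : {ffun 'I_n -> U}) i)] | g in S].

Lemma CE_pred_map (a : intpartn n -> nat) (U V : finType) (f : U -> V)
  (fb : bijective f) (x : intpartn n * nat * {set {ffun 'I_n -> U}}) :
  CE_pred a x -> CE_pred a (x.1, map_cosets f x.2).
Proof.
case/andP=> /= ha /existsP [lam /and3P [il cU /eqP eS]].
rewrite /CE_pred /= ha /=; apply/existsP; exists [ffun i => f (lam i)].
apply/and3P; split.
- apply/injectiveP => i j; rewrite !ffunE => /(bij_inj fb).
  by move/injectiveP: il; apply.
- by rewrite -(bij_eq_card fb).
- rewrite /map_cosets eS -imset_comp; apply/eqP/eq_imset => h /=.
  by apply/ffunP => i; rewrite !ffunE.
Qed.

Definition CE_map (a : intpartn n -> nat) (U V : finType) (f : U -> V)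
  (fb : bijective f) (x : CE a U) : CE a V :=
  exist _ ((val x).1, map_cosets f (val x).2) (CE_pred_map fb (valP x)).

Definition prod_coef (a b : intpartn n -> nat) (mu : intpartn n) : nat :=
  \sum_(al : intpartn n) \sum_(be : intpartn n) a al * b be * bcoef al be mu.

End Species.

From mathcomp Require Import all_boot all_order all_fingroup all_solvable.
From mathcomp Require Import zify.

Set Implicit Arguments.
Unset Strict Implicit.
Unset Printing Implicit Defensive.

(* Given S = lam <sigma_alpha> and T = rho <sigma_beta>, the permutations d with
   rho' o d in S for some rho' in T form a single double coset
   D = <sigma_alpha> d <sigma_beta>.  Taking d to be the canonical representative of D
   and rechoosing rho so that lam = rho o d, the pair (S, T) is determined by D and by
   S meet (T o d), a coset of the intersection L of <sigma_alpha> with a conjugate of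
   <sigma_beta>.  As a subgroup of a cyclic group, L is cyclic, hence conjugate by
   some g to <sigma_mu> for exactly one mu: listing the cycles of a generator by
   decreasing length conjugates it to sigma_mu, and conjugation preserves the
   multiset of orbit lengths, which determines mu.  Translating S meet (T o d) by g
   turns it into a C_mu-structure, and its copy index records D together with the
   copies of C_alpha and C_beta the pair came from; these are counted by prod_coef.
   Every choice is made inside S_n, so the bijection commutes with relabellings of U. *)

Arguments Hcyc : simpl never.

(** * Sequences of natural numbers *)

Lemma sumn_take_leq (s : seq nat) i j : i <= j -> sumn (take i s) <= sumn (take j s).
Proof.
move=> le_ij; rewrite -(take_takel s le_ij).
by rewrite -{2}(cat_take_drop i (take j s)) sumn_cat leq_addr.
Qed.

Lemma sumn_takeS (s : seq nat) j : j < size s ->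
  sumn (take j.+1 s) = sumn (take j s) + nth 0 s j.
Proof. by move=> lt_js; rewrite (take_nth 0 lt_js) sumn_rcons. Qed.

Lemma flatten_index_lt_take (s : seq nat) j k t : j < k -> k <= size s ->
  t < nth 0 s j -> flatten_index s j t < sumn (take k s).
Proof.
move=> lt_jk le_ks lt_t; rewrite /flatten_index.
have := sumn_take_leq s lt_jk; rewrite sumn_takeS; lia.
Qed.

Lemma sumn_filter_gt0 (s : seq nat) : sumn [seq x <- s | 0 < x] = sumn s.
Proof. by elim: s => //= -[|x] s /= ->. Qed.

Lemma geq_trans : transitive geq.
Proof. by move=> y x z /= le_yx le_zy; apply: leq_trans le_zy le_yx. Qed.

Lemma anti_geq : antisymmetric geq.
Proof. by move=> x y /andP [le_yx le_xy]; apply/anti_leq/andP. Qed.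

Lemma leq_sumn (s : seq nat) x : x \in s -> x <= sumn s.
Proof. by elim: s => //= y s IHs /predU1P [->|/IHs]; [exact: leq_addr | lia]. Qed.

Lemma size_leq_sumn (s : seq nat) : all (fun x => 0 < x) s -> size s <= sumn s.
Proof. by elim: s => //= x s IHs /andP [x_gt0 /IHs]; lia. Qed.

Lemma path_geq_nseq0 c k : path geq c (nseq k 0).
Proof. by elim: k c => //= k IHk c; rewrite IHk andbT. Qed.

Lemma sorted_geq_cat_zeros s k : sorted geq s -> sorted geq (s ++ nseq k 0).
Proof.
case: s => [_|x s] /=; first by case: k => //= k; apply: path_geq_nseq0.
by rewrite cat_path path_geq_nseq0 andbT.
Qed.

Lemma sorted_geq_zeros (s : seq nat) : sorted geq s ->
  s = [seq x <- s | 0 < x] ++ nseq (size s - size [seq x <- s | 0 < x]) 0.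
Proof.
elim: s => //= -[|x] s IHs path_s; last by rewrite /= subSS -IHs ?(path_sorted path_s).
have /all_pred1P -> : all (pred1 0) s.
  by apply/allP => y /(allP (order_path_min geq_trans path_s)); rewrite /= leqn0.
by rewrite filter_nseq size_nseq.
Qed.

Definition expand_parts (s : seq nat) : seq nat := flatten [seq nseq q q | q <- s].

Lemma shape_expand_parts s : shape [seq nseq q q | q <- s] = s.
Proof. by rewrite /shape -map_comp; elim: s => //= q s ->; rewrite size_nseq. Qed.

Lemma count_expand_parts s q : count_mem q (expand_parts s) = q * count_mem q s.
Proof.
rewrite /expand_parts; elim: s => [|x s IHs] /=; first by rewrite muln0.
rewrite count_cat count_nseq IHs mulnDr mulnC /=.
by have [->|_] := eqVneq x q; rewrite /= ?muln0.
Qed.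

Lemma nth_flatten_index T (x0 : T) (ss : seq (seq T)) j t :
  t < size (nth [::] ss j) ->
  nth x0 (flatten ss) (flatten_index (shape ss) j t) = nth x0 (nth [::] ss j) t.
Proof.
by rewrite -nth_shape => lt_t; rewrite nth_flatten flatten_indexKl ?flatten_indexKr.
Qed.

Lemma uniq_flatten_map (S T : eqType) (F : S -> seq T) (pr : T -> S) (s : seq S) :
  uniq s -> {in s, forall x, uniq (F x)} -> {in s, forall x, {in F x, forall y, pr y = x}} ->
  uniq (flatten [seq F x | x <- s]).
Proof.
elim: s => //= x s IHs /andP [x_notin_s uniq_s] uniq_F pr_F.
rewrite cat_uniq uniq_F ?mem_head // IHs //; last 2 first.
- by move=> z z_s; apply: uniq_F; rewrite inE z_s orbT.
- by move=> z z_s; apply: pr_F; rewrite inE z_s orbT.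
rewrite andbT; apply/hasP => -[y /flatten_mapP [z z_s y_z] y_x].
have := pr_F z; rewrite inE z_s orbT => /(_ isT _ y_z).
by rewrite (pr_F x (mem_head x s) y y_x) => eq_xz; rewrite eq_xz z_s in x_notin_s.
Qed.

Lemma allpairs_pair_uniq (S T : eqType) (s : seq S) (t : S -> seq T) :
  uniq s -> {in s, forall x, uniq (t x)} -> uniq [seq (x, y) | x <- s, y <- t x].
Proof.
by move=> uniq_s uniq_t; apply: allpairs_uniq_dep => // -[x y] [x' y'] _ _ /= [-> ->].
Qed.

(** * Orbits and double cosets *)

Lemma iter_porbit_mod (T : finType) (s : {perm T}) x k :
  iter (k %% #|porbit s x|) s x = iter k s x.
Proof.
have iter_mul q : iter (q * #|porbit s x|) s x = x.
  by elim: q => [|q IHq]; rewrite ?mul0n // mulSn iterD IHq iter_porbit.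
by rewrite {2}(divn_eq k #|porbit s x|) addnC iterD iter_mul.
Qed.

Section OrbitSizes.
Variable T : finType.
Implicit Types (H : {set {perm T}}) (g : {perm T}).

Definition orbit_sizes H : seq nat := [seq #|orbit 'P H x| | x <- enum T].

Lemma card_orbit_conj H g x : #|orbit 'P (H :^ g)%g (g x)| = #|orbit 'P H x|.
Proof.
rewrite -(card_preimset _ (@perm_inj _ g)); apply: eq_card => y.
by rewrite inE; exact: orbit_conjsg.
Qed.

Lemma orbit_sizes_conj H g : perm_eq (orbit_sizes (H :^ g)%g) (orbit_sizes H).
Proof.
have -> : orbit_sizes H = [seq #|orbit 'P (H :^ g)%g x| | x <- map g (enum T)].
  by rewrite -map_comp; apply: eq_map => x /=; rewrite card_orbit_conj.
apply/perm_map/uniq_perm => [||y]; first exact: enum_uniq.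
  by rewrite (map_inj_uniq (@perm_inj _ g)) enum_uniq.
by rewrite mem_enum; apply/esym/mapP; exists (g^-1 y)%g; rewrite ?mem_enum ?permKV.
Qed.

End OrbitSizes.

Section DoubleCosets.
Variables (gT : finGroupType) (H K : {group gT}).
Local Open Scope group_scope.

Lemma mem_dcosetP x y :
  reflect (exists h k, [/\ h \in H, k \in K & y = h * x * k]) (y \in H :* x * K).
Proof.
apply: (iffP idP) => [/mulsgP [z k /rcosetP [h h_H ->] k_K ->]|[h [k [h_H k_K ->]]]].
  by exists h, k.
by apply: mem_mulg => //; apply/rcosetP; exists h.
Qed.

Lemma lrcoset_conjsg (A : {set gT}) x : x *: A :* x^-1 = A :^ x^-1.
Proof.
rewrite conjsgE invgK; apply/setP => y.
by rewrite mem_rcoset !mem_lcoset mem_rcoset mulgA.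
Qed.

Lemma dcoset_transl x y : y \in H :* x * K -> H :* y * K = H :* x * K.
Proof.
move/mem_dcosetP => [h [k [h_H k_K ->]]]; apply/setP => z.
apply/mem_dcosetP/mem_dcosetP => -[h' [k' [h'_H k'_K ->]]].
  by exists (h' * h), (k * k'); rewrite !groupM // !mulgA.
exists (h' * h^-1), (k^-1 * k'); rewrite !groupM ?groupV //.
by rewrite !mulgA mulgKV mulgK.
Qed.

Lemma dcoset_meet_conj x h k : h \in H -> k \in K ->
  H :&: K :^ (h * x * k)^-1 = (H :&: K :^ x^-1) :^ h^-1.
Proof.
move=> h_H k_K; rewrite !invMg !conjsgM (conjGid (groupVr k_K)) conjIg.
by rewrite (conjGid (groupVr h_H)).
Qed.

End DoubleCosets.

(** * Cycle types *)

Section StandardPermutation.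
Variable n : nat.
Implicit Types (mu : intpartn n) (p : seq nat).

Lemma rot_perm_in c q (i : 'I_n) : c + q <= n -> c <= i < c + q ->
  rot_perm n c q i = c + (i - c).+1 %% q :> nat.
Proof.
by move=> le_cq /andP [le_ci lt_icq]; rewrite permE /= /rot_nat le_ci lt_icq le_cq.
Qed.

Lemma rot_perm_out c q (i : 'I_n) : ~~ (c <= i < c + q) -> rot_perm n c q i = i.
Proof.
move=> out_i; apply: val_inj; rewrite permE /= /rot_nat.
by case: and3P => // -[le_ci lt_icq _]; rewrite le_ci lt_icq in out_i.
Qed.

Lemma rot_perm_block p j t (i : 'I_n) : sumn p <= n -> j < size p ->
  t < nth 0 p j -> i = flatten_index p j t :> nat ->
  rot_perm n (sumn (take j p)) (nth 0 p j) i = flatten_index p j (t.+1 %% nth 0 p j) :> nat.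
Proof.
move=> le_pn lt_jp lt_t ei.
have le_block : sumn (take j p) + nth 0 p j <= n.
  by rewrite -sumn_takeS //; apply: leq_trans le_pn; rewrite -{2}(take_size p) sumn_take_leq.
rewrite rot_perm_in // ei /flatten_index; last lia.
by rewrite addKn.
Qed.

Lemma rot_perm_other p j k t (i : 'I_n) : k != j -> k < size p ->
  t < nth 0 p j -> i = flatten_index p j t :> nat ->
  rot_perm n (sumn (take k p)) (nth 0 p k) i = i.
Proof.
move=> ne_kj lt_kp lt_t ei; apply: rot_perm_out; rewrite ei.
case: (ltngtP j k) ne_kj => // [lt_jk|lt_kj] _.
  by have := flatten_index_lt_take lt_jk (ltnW lt_kp) lt_t; lia.
have := sumn_take_leq p lt_kj; rewrite sumn_takeS // /flatten_index; lia.
Qed.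

Lemma prod_rot_perm_block p m j t (i : 'I_n) : sumn p <= n -> m <= size p ->
  j < size p -> t < nth 0 p j -> i = flatten_index p j t :> nat ->
  (\prod_(k < m) rot_perm n (sumn (take k p)) (nth 0 p k))%g i
    = flatten_index p j (if j < m then t.+1 %% nth 0 p j else t) :> nat.
Proof.
move=> le_pn + lt_jp lt_t ei; elim: m => [|m IHm] le_mp.
  by rewrite big_ord0 perm1.
rewrite big_ord_recr permM /=; set i' := fun_of_perm _ i.
have ei' := IHm (ltnW le_mp); rewrite -/i' in ei'.
have lt_t' : (if j < m then t.+1 %% nth 0 p j else t) < nth 0 p j.
  by case: ifP => // _; rewrite ltn_mod; lia.
have [eq_mj|ne_mj] := eqVneq m j.
  subst m; rewrite ltnn in ei'.
  by rewrite (rot_perm_block le_pn lt_jp lt_t ei') leqnn.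
have -> : (j < m.+1) = (j < m) by rewrite ltnS leq_eqVlt eq_sym (negbTE ne_mj).
by rewrite (rot_perm_other ne_mj le_mp lt_t' ei') ei'.
Qed.

Lemma parts_sum mu : sumn (parts mu) = n.
Proof. by rewrite /parts sumn_filter_gt0; case: mu => t /= /andP [_ /eqP]. Qed.

Lemma parts_gt0 mu : all (fun x => 0 < x) (parts mu).
Proof. exact: filter_all. Qed.

Lemma sigma_std_block mu j t (i : 'I_n) : j < size (parts mu) ->
  t < nth 0 (parts mu) j -> i = flatten_index (parts mu) j t :> nat ->
  sigma_std mu i = flatten_index (parts mu) j (t.+1 %% nth 0 (parts mu) j) :> nat.
Proof.
move=> lt_jp lt_t ei.
by rewrite (prod_rot_perm_block _ (leqnn _) lt_jp lt_t ei) ?lt_jp ?parts_sum.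
Qed.

Lemma sigma_std_expg mu j t k (i : 'I_n) : j < size (parts mu) ->
  t < nth 0 (parts mu) j -> i = flatten_index (parts mu) j t :> nat ->
  (sigma_std mu ^+ k)%g i
    = flatten_index (parts mu) j ((t + k) %% nth 0 (parts mu) j) :> nat.
Proof.
move=> lt_jp lt_t ei; elim: k => [|k IHk]; first by rewrite expg0 perm1 addn0 modn_small.
have lt_tk : (t + k) %% nth 0 (parts mu) j < nth 0 (parts mu) j by rewrite ltn_mod; lia.
by rewrite expgSr permM (sigma_std_block lt_jp lt_tk IHk) -addn1 modnDml addn1 addnS.
Qed.

Lemma card_porbit_sigma_std mu j t (i : 'I_n) : j < size (parts mu) ->
  t < nth 0 (parts mu) j -> i = flatten_index (parts mu) j t :> nat ->
  #|porbit (sigma_std mu) i| = nth 0 (parts mu) j.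
Proof.
set q := nth 0 _ j => lt_jp lt_t ei.
have orbitE k : (sigma_std mu ^+ k)%g i = (sigma_std mu ^+ (k %% q))%g i.
  by apply: ord_inj; rewrite !(sigma_std_expg _ lt_jp lt_t ei) modnDmr.
apply/eqP; rewrite eqn_leq; apply/andP; split.
  rewrite -[q in _ <= q]card_ord.
  apply: leq_trans (leq_imset_card (fun k : 'I_q => (sigma_std mu ^+ k)%g i) _).
  apply/subset_leq_card/subsetP => y /porbitP [k ->]; rewrite orbitE.
  by apply/imsetP; exists (Ordinal (ltn_pmod k (leq_ltn_trans (leq0n t) lt_t))).
apply: dvdn_leq; first by rewrite lt0n card_porbit_neq0.
have := congr1 (@nat_of_ord n) (iter_porbit (sigma_std mu) i); rewrite -permX.
rewrite (sigma_std_expg _ lt_jp lt_t ei) ei /flatten_index => /addnI.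
by rewrite -{2}(modn_small lt_t) -{2}[t]addn0 => /eqP; rewrite eqn_modDl mod0n.
Qed.

End StandardPermutation.

Section Partitions.
Variable n : nat.
Implicit Types mu nu : intpartn n.

Lemma partn_sorted mu : sorted geq (map val (val mu)).
Proof. by case: mu => t /= /andP []. Qed.

Lemma parts_sorted mu : sorted geq (parts mu).
Proof. exact: sorted_filter geq_trans _ _ (partn_sorted mu). Qed.

Lemma partn_parts mu : map val (val mu) = parts mu ++ nseq (n - size (parts mu)) 0.
Proof. by rewrite {1}(sorted_geq_zeros (partn_sorted mu)) size_map size_tuple. Qed.

Lemma parts_inj : injective (@parts n).
Proof.
by move=> mu nu e; apply/val_inj/val_inj/(inj_map val_inj); rewrite !partn_parts e.
Qed.

Lemma parts_exists s : sorted geq s -> all (fun x => 0 < x) s -> sumn s = n ->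
  exists mu : intpartn n, parts mu = s.
Proof.
move=> sorted_s s_gt0 sum_s; set zs := s ++ nseq (n - size s) 0.
have size_s := size_leq_sumn s_gt0; rewrite sum_s in size_s.
have size_t : size (map (@inord n) zs) == n by rewrite size_map size_cat size_nseq; lia.
have val_t : map val (Tuple size_t) = zs.
  rewrite /= -map_comp -[RHS]map_id; apply/eq_in_map => x /=.
  rewrite mem_cat mem_nseq => /orP [/leq_sumn|/andP [_ /eqP ->]]; last exact: inordK.
  by rewrite sum_s => /inordK.
have pred_t : partn_pred (Tuple size_t).
  rewrite /partn_pred val_t sumn_cat sumn_nseq sum_s mul0n addn0 eqxx andbT.
  exact: sorted_geq_cat_zeros.
exists (exist (@partn_pred n) _ pred_t).
by rewrite /parts /= val_t filter_cat filter_nseq /= cats0; apply/all_filterP.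
Qed.

End Partitions.

Section CycleType.
Variable n : nat.
Implicit Types mu nu : intpartn n.

Lemma orbit_sizes_Hcyc mu : orbit_sizes (Hcyc mu) = expand_parts (parts mu).
Proof.
have size_exp : size (expand_parts (parts mu)) = n.
  by rewrite size_flatten shape_expand_parts parts_sum.
apply: (@eq_from_nth _ 0); first by rewrite size_map size_enum_ord.
rewrite size_map size_enum_ord => i lt_in; pose x := Ordinal lt_in.
have lt_i : i < sumn (parts mu) by rewrite parts_sum.
have lt_jp := reshape_indexP lt_i; have lt_t := reshape_offsetP lt_i.
rewrite (nth_map x) ?size_enum_ord // -[i]/(nat_of_ord x) nth_ord_enum /= -porbitE.
rewrite (card_porbit_sigma_std lt_jp lt_t) ?reshape_indexK //.
rewrite /expand_parts nth_flatten shape_expand_parts (nth_map 0) //.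
by rewrite nth_nseq lt_t.
Qed.

Lemma Hcyc_conj_inj mu nu g : (Hcyc mu :^ g)%g = Hcyc nu :> {set _} -> mu = nu.
Proof.
move=> e; apply: parts_inj.
apply: (sorted_eq geq_trans anti_geq); rewrite ?parts_sorted //.
apply/allP => q _ /=.
have := orbit_sizes_conj (Hcyc mu) g; rewrite e !orbit_sizes_Hcyc.
move=> /seq.permP/(_ (pred1 q)); rewrite !count_expand_parts.
have [->|q_gt0] := posnP q; last by move/eqP; rewrite eqn_mul2l eqn0Ngt q_gt0 eq_sym.
have no0 lambda : count_mem 0 (parts lambda) = 0.
  by apply/count_memPn; apply/negP => /(allP (parts_gt0 lambda)).
by rewrite !no0.
Qed.

End CycleType.

Section CycleDecomposition.
Variables (n : nat) (tau : {perm 'I_n}).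

Definition cycles : seq {set 'I_n} :=
  sort (fun A B : {set 'I_n} => #|B| <= #|A|) (enum (porbits tau)).

Definition cycle_traject (A : {set 'I_n}) : seq 'I_n :=
  if [pick x in A] is Some x then traject tau x #|A| else [::].

Definition cycle_lengths : seq nat := [seq #|A| | A : {set 'I_n} <- cycles].

Definition cycle_listing : seq 'I_n := flatten [seq cycle_traject A | A <- cycles].

Lemma mem_cycles A : (A \in cycles) = (A \in porbits tau).
Proof. by rewrite mem_sort mem_enum. Qed.

Lemma cycle_trajectP A : A \in cycles ->
  exists x, A = porbit tau x /\ cycle_traject A = traject tau x #|A|.
Proof.
rewrite mem_cycles => /imsetP [y _ ->]; rewrite /cycle_traject.
case: pickP => [x x_y|/(_ y)]; last by rewrite porbit_id.
by exists x; split => //; apply/eqP; rewrite eq_porbit_mem porbit_sym.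
Qed.

Lemma shape_cycle_listing : shape [seq cycle_traject A | A <- cycles] = cycle_lengths.
Proof.
rewrite /shape -map_comp; apply/eq_in_map => A /cycle_trajectP [x [_ traj_A]].
by rewrite /= traj_A size_traject.
Qed.

Lemma cycle_listing_uniq : uniq cycle_listing.
Proof.
apply: (uniq_flatten_map (pr := porbit tau)); first by rewrite sort_uniq enum_uniq.
  by move=> A /cycle_trajectP [x [-> ->]]; apply: uniq_traject_porbit.
move=> A /cycle_trajectP [x [-> ->]] y; rewrite -porbit_traject => y_x.
by apply/eqP; rewrite eq_porbit_mem.
Qed.

Lemma mem_cycle_listing y : y \in cycle_listing.
Proof.
have y_cycles : porbit tau y \in cycles by rewrite mem_cycles imset_f.
apply/flatten_mapP; exists (porbit tau y) => //.
have [x [e ->]] := cycle_trajectP y_cycles.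
by rewrite e -porbit_traject -e porbit_id.
Qed.

Lemma size_cycle_listing : size cycle_listing = n.
Proof.
rewrite -(card_uniqP cycle_listing_uniq) -[RHS]card_ord.
by apply: eq_card => y; rewrite mem_cycle_listing.
Qed.

Lemma cycle_lengths_sum : sumn cycle_lengths = n.
Proof. by rewrite -shape_cycle_listing -size_flatten size_cycle_listing. Qed.

Lemma cycle_lengths_gt0 : all (fun x => 0 < x) cycle_lengths.
Proof.
apply/allP => _ /mapP [A /cycle_trajectP [x [-> _]] ->].
by rewrite lt0n card_porbit_neq0.
Qed.

Lemma cycle_lengths_sorted : sorted geq cycle_lengths.
Proof. by rewrite sorted_map; apply: sort_sorted => A B; apply: leq_total. Qed.

Lemma cycle_listing_inj : injective (fun i : 'I_n => nth i cycle_listing i).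
Proof.
move=> i j; rewrite (set_nth_default i j) ?size_cycle_listing // => /eqP.
by rewrite nth_uniq ?size_cycle_listing ?cycle_listing_uniq // => /eqP /val_inj.
Qed.

Definition listing_perm : {perm 'I_n} := perm cycle_listing_inj.

Lemma cycle_listing_block j : j < size cycles ->
  exists x, nth 0 cycle_lengths j = #|porbit tau x| /\
    forall t y, t < #|porbit tau x| ->
      nth y cycle_listing (flatten_index cycle_lengths j t) = iter t tau x.
Proof.
move=> lt_jc; have [x [eA traj_A]] := cycle_trajectP (mem_nth set0 lt_jc).
exists x; split=> [|t y lt_t]; first by rewrite (nth_map set0) // eA.
have traj_j : nth [::] [seq cycle_traject A | A <- cycles] j = traject tau x #|porbit tau x|.
  by rewrite (nth_map set0) // traj_A eA.
rewrite -shape_cycle_listing nth_flatten_index traj_j ?size_traject //.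
by rewrite (set_nth_default x) ?size_traject // nth_traject.
Qed.

Lemma listing_permM mu (i : 'I_n) : parts mu = cycle_lengths ->
  listing_perm (sigma_std mu i) = tau (listing_perm i).
Proof.
move=> parts_mu; rewrite !permE.
have lt_i : i < sumn (parts mu) by rewrite parts_sum.
have lt_jp := reshape_indexP lt_i; have lt_t := reshape_offsetP lt_i.
have ei := esym (reshape_indexK (parts mu) i).
have sigma_i := sigma_std_block lt_jp lt_t ei.
rewrite parts_mu in lt_jp lt_t ei sigma_i; rewrite size_map in lt_jp.
have [x [len_j nth_j]] := cycle_listing_block lt_jp; rewrite len_j in lt_t sigma_i.
have card_gt0 : 0 < #|porbit tau x| by rewrite lt0n card_porbit_neq0.
by rewrite sigma_i [in RHS]ei !nth_j ?ltn_pmod // iter_porbit_mod.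
Qed.

End CycleDecomposition.

Lemma perm_conj_sigma_std n (tau : {perm 'I_n}) : exists mu g, (tau ^ g)%g = sigma_std mu.
Proof.
have [mu parts_mu] := parts_exists (cycle_lengths_sorted tau) (cycle_lengths_gt0 tau)
  (cycle_lengths_sum tau).
exists mu, (listing_perm tau)^-1%g; apply/permP => i; rewrite conjgE invgK !permM.
by apply: (@perm_inj _ (listing_perm tau)); rewrite permKV listing_permM.
Qed.

Lemma cyclic_conj_Hcyc n (L : {group {perm 'I_n}}) : cyclic L ->
  exists mu g, (L :^ g)%g = Hcyc mu :> {set _}.
Proof.
move/cyclicP => [tau ->]; have [mu [g e]] := perm_conj_sigma_std tau.
by exists mu, g; rewrite -cycleJ e.
Qed.

Section MeetType.
Variable n : nat.
Implicit Types al be mu : intpartn n.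
Local Open Scope group_scope.

(* [A :^ x] is [x^-1 A x], so [Hcyc be :^ pi^-1] is the paper's pi <sigma_beta> pi^-1. *)
Lemma dcoset_condE al be mu pi : dcoset_cond al be mu pi =
  [exists g, (Hcyc al :&: Hcyc be :^ pi^-1) :^ g == Hcyc mu :> {set _}].
Proof. by rewrite /dcoset_cond lrcoset_conjsg. Qed.

Lemma dcoset_cond_transl al be mu pi x : dcoset_cond al be mu pi ->
  x \in Hcyc al :* pi * Hcyc be -> dcoset_cond al be mu x.
Proof.
rewrite !dcoset_condE => /existsP [g e] /mem_dcosetP [h [k [h_H k_K ->]]].
by apply/existsP; exists (h * g); rewrite dcoset_meet_conj // -conjsgM mulKg.
Qed.

Definition meet_type al be (d : {perm 'I_n}) : intpartn n * {perm 'I_n} :=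
  odflt (al, 1) [pick p | (Hcyc al :&: Hcyc be :^ d^-1) :^ p.2 == Hcyc p.1 :> {set _}].

Lemma meet_typeP al be d :
  (Hcyc al :&: Hcyc be :^ d^-1) :^ (meet_type al be d).2 = Hcyc (meet_type al be d).1.
Proof.
rewrite /meet_type; case: pickP => [p /eqP //|no_p].
have cyclic_meet : cyclic (Hcyc al :&: Hcyc be :^ d^-1)%G.
  exact: cyclicS (subsetIl _ _) (cycle_cyclic _).
have [mu [g e]] := cyclic_conj_Hcyc cyclic_meet.
by have := no_p (mu, g); rewrite /= e eqxx.
Qed.

Lemma meet_type_cond al be d : dcoset_cond al be (meet_type al be d).1 d.
Proof.
by rewrite dcoset_condE; apply/existsP; exists (meet_type al be d).2; rewrite meet_typeP.
Qed.

Lemma meet_type_fst al be mu d : dcoset_cond al be mu d -> (meet_type al be d).1 = mu.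
Proof.
rewrite dcoset_condE => /existsP [g /eqP e].
apply: (@Hcyc_conj_inj _ _ _ ((meet_type al be d).2^-1 * g)).
by rewrite -meet_typeP conjsgM conjsgK.
Qed.

End MeetType.

(** * Cosets of bijections *)

Section FunctionCosets.
Variables (n : nat) (U : finType).
Implicit Types (l r : {ffun 'I_n -> U}) (S T : {set {ffun 'I_n -> U}}).
Implicit Types (A : {set {perm 'I_n}}) (H K : {group {perm 'I_n}}).
Local Open Scope group_scope.

Definition fcomp l (h : {perm 'I_n}) : {ffun 'I_n -> U} := [ffun i => l (h i)].

Definition fcoset l A : {set {ffun 'I_n -> U}} := [set fcomp l h | h in A].

Definition ftrans S (h : {perm 'I_n}) : {set {ffun 'I_n -> U}} := [set fcomp l h | l in S].

Lemma fcompA l a b : fcomp (fcomp l a) b = fcomp l (b * a).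
Proof. by apply/ffunP => i; rewrite !ffunE permM. Qed.

Lemma fcomp1 l : fcomp l 1 = l.
Proof. by apply/ffunP => i; rewrite !ffunE perm1. Qed.

Lemma fcompK a : cancel (fcomp^~ a) (fcomp^~ a^-1).
Proof. by move=> l; rewrite fcompA mulVg fcomp1. Qed.

Lemma fcompKV a : cancel (fcomp^~ a^-1) (fcomp^~ a).
Proof. by move=> l; rewrite fcompA mulgV fcomp1. Qed.

Lemma fcomp_injl l : injective l -> injective (fcomp l).
Proof.
by move=> inj_l a b /ffunP e; apply/permP => i; apply: inj_l; have := e i; rewrite !ffunE.
Qed.

Lemma fcomp_inj l a : injective l -> injective (fcomp l a).
Proof. by move=> inj_l i j; rewrite !ffunE => /inj_l /perm_inj. Qed.

Lemma fcoset_id l H : l \in fcoset l H.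
Proof. by apply/imsetP; exists 1; rewrite ?group1 ?fcomp1. Qed.

Lemma fcoset_transl l l' H : l' \in fcoset l H -> fcoset l' H = fcoset l H.
Proof.
move=> /imsetP [h h_H ->]; apply/setP => y.
apply/imsetP/imsetP => -[k k_H ->].
  by exists (k * h); rewrite ?groupM // fcompA.
by exists (k * h^-1); rewrite ?groupM ?groupV // fcompA mulgKV.
Qed.

Lemma fcoset_inj l H l' : injective l -> l' \in fcoset l H -> injective l'.
Proof. by move=> inj_l /imsetP [h _ ->]; apply: fcomp_inj. Qed.

Lemma ffun_transfer l r : injective l -> injective r -> #|U| = n ->
  exists d, r = fcomp l d.
Proof.
move=> inj_l inj_r card_U.
have onto_l u : u \in codom l by apply: inj_card_onto; rewrite ?card_U ?card_ord.
pose d i := iinv (onto_l (r i)).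
have inj_d : injective d by move=> i j /(congr1 l); rewrite !f_iinv => /inj_r.
by exists (perm inj_d); apply/ffunP => i; rewrite ffunE permE f_iinv.
Qed.

Definition pair_dcoset S T : {set {perm 'I_n}} :=
  [set d | [exists r in T, fcomp r d \in S]].

Definition pair_meet (d : {perm 'I_n}) S T : {set {ffun 'I_n -> U}} :=
  [set l in S | fcomp l d^-1 \in T].

Lemma pair_dcoset_fcoset H K r d : injective r ->
  pair_dcoset (fcoset (fcomp r d) H) (fcoset r K) = H :* d * K.
Proof.
move=> inj_r; apply/setP => x; rewrite inE; apply/existsP/mem_dcosetP.
  move=> [_ /andP [/imsetP [k k_K ->] /imsetP [h h_H]]].
  rewrite !fcompA => /(fcomp_injl inj_r) e.
  by exists h, k^-1; split; rewrite ?groupV // -e mulgK.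
move=> [h [k [h_H k_K ->]]]; exists (fcomp r k^-1).
rewrite imset_f ?groupV //= fcompA mulgK.
by apply/imsetP; exists h; rewrite ?fcompA.
Qed.

Lemma pair_meet_fcoset H K r d : injective r ->
  pair_meet d (fcoset (fcomp r d) H) (fcoset r K) = fcoset (fcomp r d) (H :&: K :^ d^-1).
Proof.
move=> inj_r; apply/setP => y; rewrite inE; apply/andP/imsetP.
  move=> [/imsetP [h h_H ->]]; rewrite !fcompA => /imsetP [k k_K].
  move/(fcomp_injl inj_r) => e; exists h; last by rewrite fcompA.
  by rewrite in_setI h_H mem_conjg invgK conjgE mulgA e.
move=> [h]; rewrite in_setI mem_conjg invgK => /andP [h_H hd_K] ->.
split; first exact: imset_f.
by apply/imsetP; exists (h ^ d) => //; rewrite !fcompA conjgE !mulgA.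
Qed.

Lemma ftrans_fcoset l A g : ftrans (fcoset l A) g = fcoset (fcomp l g) (A :^ g^-1).
Proof.
apply/setP => y; apply/imsetP/imsetP => [[_ /imsetP [a a_A ->] ->]|[b]].
  by exists (a ^ g^-1); rewrite ?memJ_conjg // !fcompA conjgE invgK !mulgA mulgKV.
rewrite mem_conjg invgK => b_A ->; exists (fcomp l (b ^ g)); first exact: imset_f.
by rewrite !fcompA conjgE !mulgA mulgV mul1g.
Qed.

End FunctionCosets.

Section Transport.
Variables (n : nat) (U V : finType) (f : U -> V).
Hypothesis inj_f : injective f.
Implicit Types (S T : {set {ffun 'I_n -> U}}).

Definition fmap (l : {ffun 'I_n -> U}) : {ffun 'I_n -> V} := [ffun i => f (l i)].

Lemma map_cosetsE S : map_cosets f S = fmap @: S.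
Proof. by []. Qed.

Lemma fmap_inj : injective fmap.
Proof.
by move=> l l' /ffunP e; apply/ffunP => i; apply: inj_f; have := e i; rewrite !ffunE.
Qed.

Lemma fcomp_fmap l d : fcomp (fmap l) d = fmap (fcomp l d).
Proof. by apply/ffunP => i; rewrite !ffunE. Qed.

Lemma pair_dcoset_map S T :
  pair_dcoset (map_cosets f S) (map_cosets f T) = pair_dcoset S T.
Proof.
apply/setP => d; rewrite !inE !map_cosetsE; apply/existsP/existsP => -[r].
  case/andP => /imsetP [r0 r0_T ->]; rewrite fcomp_fmap (mem_imset _ _ fmap_inj) => r0d_S.
  by exists r0; apply/andP.
by case/andP => r_T rd_S; exists (fmap r); rewrite fcomp_fmap !(mem_imset _ _ fmap_inj) r_T.
Qed.

Lemma pair_meet_map d S T :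
  pair_meet d (map_cosets f S) (map_cosets f T) = map_cosets f (pair_meet d S T).
Proof.
apply/setP => y; rewrite !map_cosetsE inE; apply/andP/imsetP.
  case=> /imsetP [l l_S ->]; rewrite fcomp_fmap (mem_imset _ _ fmap_inj) => ld_T.
  by exists l; rewrite // inE l_S.
case=> l; rewrite inE => /andP [l_S ld_T] ->.
by rewrite fcomp_fmap !(mem_imset _ _ fmap_inj).
Qed.

Lemma ftrans_map S g : ftrans (map_cosets f S) g = map_cosets f (ftrans S g).
Proof.
by rewrite /ftrans !map_cosetsE -!imset_comp; apply: eq_imset => l /=; rewrite fcomp_fmap.
Qed.

End Transport.

(** * The product bijection *)

Section Labels.
Variable n : nat.
Implicit Types (al be mu : intpartn n) (c : intpartn n -> nat).

Definition copies c : seq (intpartn n * nat) :=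
  [seq (al, i) | al <- index_enum (intpartn n), i <- iota 0 (c al)].

Lemma mem_copies c x : (x \in copies c) = (x.2 < c x.1).
Proof.
apply/allpairsPdep/idP => [[al [i [_ + ->]]]|]; first by rewrite mem_iota.
by case: x => al i lt_i; exists al, i; rewrite mem_index_enum mem_iota.
Qed.

Lemma copies_uniq c : uniq (copies c).
Proof. by apply: allpairs_pair_uniq; rewrite ?index_enum_uniq // => al _; apply: iota_uniq. Qed.

Lemma sum_copies c (F : intpartn n -> nat) :
  \sum_(x <- copies c) F x.1 = \sum_al c al * F al.
Proof.
rewrite big_allpairs_dep /=; apply: eq_bigr => al _.
by rewrite big_const_seq count_predT size_iota iter_addn_0 mulnC.
Qed.

Definition dcosets_of_type al be mu : {set {set {perm 'I_n}}} :=
  [set (Hcyc al :* pi * Hcyc be)%g | pi in [set pi | dcoset_cond al be mu pi]].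

Variables a b : intpartn n -> nat.

(* The copy index of a product structure is the position of its label: the copies of
   C_alpha and C_beta it comes from and the double coset of the pair. *)
Definition labels mu : seq ((intpartn n * nat) * (intpartn n * nat) * {set {perm 'I_n}}) :=
  [seq (xy, D) | xy <- [seq (x, y) | x <- copies a, y <- copies b],
                 D <- enum (dcosets_of_type xy.1.1 xy.2.1 mu)].

Lemma size_labels mu : size (labels mu) = prod_coef a b mu.
Proof.
rewrite -sum1_size big_allpairs_dep big_allpairs_dep /prod_coef.
under eq_bigr do under eq_bigr do rewrite sum1_size -cardE.
rewrite (sum_copies a (fun al => \sum_(y <- copies b) bcoef al y.1 mu)).
apply: eq_bigr => al _; rewrite (sum_copies b (bcoef al ^~ mu)) big_distrr.
by apply: eq_bigr => be _; rewrite /= mulnA.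
Qed.

Lemma mem_labels mu x y D :
  ((x, y, D) \in labels mu) =
  [&& x \in copies a, y \in copies b & D \in dcosets_of_type x.1 y.1 mu].
Proof.
apply/allpairsPdep/and3P => [[_ [D' [/allpairsPdep [x' [y' [x'_a y'_b ->]]] + [-> -> ->]]]]|].
  by rewrite mem_enum.
move=> [x_a y_b D_xy]; exists (x, y), D.
by rewrite mem_enum; split=> //; apply: allpairs_f_dep.
Qed.

Lemma labels_uniq mu : uniq (labels mu).
Proof.
apply: allpairs_pair_uniq => [|xy _]; last exact: enum_uniq.
by apply: allpairs_pair_uniq => [|x _]; rewrite copies_uniq.
Qed.

End Labels.

Section CosetSpecies.
Variables (n : nat) (U : finType).
Implicit Types (mu : intpartn n) (R : {set {ffun 'I_n -> U}}).

Lemma is_cosetP mu R :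
  reflect (exists l : {ffun 'I_n -> U}, [/\ injective l, #|U| = n & R = fcoset l (Hcyc mu)])
    (is_coset mu R).
Proof.
apply: (iffP existsP) => -[l].
  by case/and3P => /injectiveP inj_l /eqP card_U /eqP eR; exists l.
case=> inj_l card_U eR; exists l.
by apply/and3P; split; [apply/injectiveP | apply/eqP | apply/eqP].
Qed.

Lemma is_coset_pick mu R : is_coset mu R ->
  exists2 th : {ffun 'I_n -> U}, [pick th in R] = Some th &
    [/\ injective th, #|U| = n & R = fcoset th (Hcyc mu)].
Proof.
case/is_cosetP => l [inj_l card_U eR].
case: pickP => [th th_R|/(_ l)]; last by rewrite eR fcoset_id.
rewrite eR in th_R *; exists th => //.
by split=> //; [exact: fcoset_inj inj_l th_R | rewrite (fcoset_transl th_R)].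
Qed.

Lemma CE_predE (c : intpartn n -> nat) (x : intpartn n * nat * {set {ffun 'I_n -> U}}) :
  CE_pred c x = (x.1 \in copies c) && is_coset x.1.1 x.2.
Proof. by rewrite mem_copies. Qed.

End CosetSpecies.

Section Bijection.
Variables (n : nat) (a b : intpartn n -> nat).
Local Notation triple U := (intpartn n * nat * {set {ffun 'I_n -> U}})%type.
Implicit Types U V : finType.

Lemma mem_dcosets_of_type (al be mu : intpartn n) d : dcoset_cond al be mu d ->
  (Hcyc al :* d * Hcyc be)%g \in dcosets_of_type al be mu.
Proof. by move=> cond_d; apply: imset_f; rewrite inE. Qed.

Lemma label_repr mu x y D : (x, y, D) \in labels a b mu ->
  [/\ x \in copies a, y \in copies b, D = (Hcyc x.1 :* repr D * Hcyc y.1)%g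
    & (meet_type x.1 y.1 (repr D)).1 = mu].
Proof.
rewrite mem_labels => /and3P [x_a y_b /imsetP [pi]]; rewrite inE => cond_pi eD.
have pi_D : pi \in D.
  by rewrite eD; apply/mem_dcosetP; exists 1%g, 1%g; rewrite !group1 mulg1 mul1g.
have d_D := mem_repr pi pi_D; rewrite {2}eD in d_D.
split=> //; first by rewrite {1}eD (dcoset_transl d_D).
by apply: meet_type_fst; apply: dcoset_cond_transl cond_pi d_D.
Qed.

Lemma pair_dcoset_normal U al be (S T : {set {ffun 'I_n -> U}}) :
  is_coset al S -> is_coset be T ->
  exists (r : {ffun 'I_n -> U}) d, [/\ injective r, repr (Hcyc al :* d * Hcyc be)%g = d,
    S = fcoset (fcomp r d) (Hcyc al), T = fcoset r (Hcyc be) & #|U| = n].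
Proof.
case/is_cosetP => l [inj_l card_U eS]; case/is_cosetP => r [inj_r _ eT].
have [d0 e_l] := ffun_transfer inj_r inj_l card_U.
have d0_D : d0 \in pair_dcoset S T.
  by rewrite inE; apply/existsP; exists r; rewrite eT fcoset_id eS -e_l fcoset_id.
have := mem_repr d0 d0_D; set d := repr _; rewrite inE => /existsP [r' /andP [r'_T r'd_S]].
rewrite eT in r'_T; rewrite eS in r'd_S; have inj_r' := fcoset_inj inj_r r'_T.
have [eS' eT'] : S = fcoset (fcomp r' d) (Hcyc al) /\ T = fcoset r' (Hcyc be).
  by rewrite eS eT (fcoset_transl r'_T) (fcoset_transl r'd_S).
exists r', d; split=> //.
by rewrite -(pair_dcoset_fcoset (Hcyc al) (Hcyc be) d inj_r') -eS' -eT'.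
Qed.

Definition prod_triple U (x y : triple U) : triple U :=
  let D := pair_dcoset x.2 y.2 in
  let d := repr D in
  let p := meet_type x.1.1 y.1.1 d in
  (p.1, index (x.1, y.1, D) (labels a b p.1), ftrans (pair_meet d x.2 y.2) p.2^-1).

Definition unprod_triple U (z : triple U) : triple U * triple U :=
  let L := nth ((z.1.1, 0), (z.1.1, 0), set0) (labels a b z.1.1) z.1.2 in
  let d := repr L.2 in
  let g := (meet_type L.1.1.1 L.1.2.1 d).2 in
  if [pick th in z.2] is Some th then
    let l := fcomp th g in
    ((L.1.1, fcoset l (Hcyc L.1.1.1)), (L.1.2, fcoset (fcomp l d^-1) (Hcyc L.1.2.1)))
  else ((L.1.1, set0), (L.1.2, set0)). (* never reached: structures are nonempty *)

Lemma prod_triple_normal U al i be j (r : {ffun 'I_n -> U}) d :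
  injective r -> repr (Hcyc al :* d * Hcyc be)%g = d ->
  prod_triple (al, i, fcoset (fcomp r d) (Hcyc al)) (be, j, fcoset r (Hcyc be)) =
  ((meet_type al be d).1,
   index ((al, i), (be, j), (Hcyc al :* d * Hcyc be)%g) (labels a b (meet_type al be d).1),
   fcoset (fcomp (fcomp r d) (meet_type al be d).2^-1) (Hcyc (meet_type al be d).1)).
Proof.
move=> inj_r e_d; rewrite /prod_triple /= pair_dcoset_fcoset // e_d pair_meet_fcoset //.
by rewrite ftrans_fcoset invgK meet_typeP.
Qed.

Lemma prod_triple_pred U (x y : triple U) : CE_pred a x -> CE_pred b y ->
  CE_pred (prod_coef a b) (prod_triple x y).
Proof.
case: x y => [[al i] S] [[be j] T] /andP [/= lt_i S_al] /andP [/= lt_j T_be].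
have [r [d [inj_r e_d eS eT card_U]]] := pair_dcoset_normal S_al T_be.
rewrite eS eT prod_triple_normal //; apply/andP; split.
  rewrite /= -size_labels index_mem mem_labels !mem_copies lt_i lt_j /=.
  exact/mem_dcosets_of_type/meet_type_cond.
apply/is_cosetP; exists (fcomp (fcomp r d) (meet_type al be d).2^-1).
by split=> //; do 2 apply: fcomp_inj.
Qed.

Lemma unprod_triple_pred U (z : triple U) : CE_pred (prod_coef a b) z ->
  CE_pred a (unprod_triple z).1 /\ CE_pred b (unprod_triple z).2.
Proof.
case: z => [[mu k] R] /andP [/= lt_k R_mu]; rewrite /unprod_triple /=.
have [th -> [inj_th card_U _]] := is_coset_pick R_mu.
have lt_k' : k < size (labels a b mu) by rewrite size_labels.
have := mem_nth ((mu, 0), (mu, 0), set0) lt_k'.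
case: (nth _ _ k) => [[x y] D] /label_repr [x_a y_b _ _]; rewrite !CE_predE x_a y_b.
by split; apply/is_cosetP; (eexists; split; [|exact: card_U|reflexivity]); do ?apply: fcomp_inj.
Qed.

Lemma prod_tripleK U (x y : triple U) : CE_pred a x -> CE_pred b y ->
  unprod_triple (prod_triple x y) = (x, y).
Proof.
move=> x_a y_b; have /andP [lt_index R_mu] := prod_triple_pred x_a y_b.
move: lt_index; rewrite /= -size_labels index_mem => L_mem.
have [th e_th [_ _ eR]] := is_coset_pick R_mu.
have /imsetP [m] : th \in (prod_triple x y).2 by rewrite eR fcoset_id.
rewrite inE => /andP [m_S md_T] e_m.
rewrite /unprod_triple /= nth_index // /= e_th e_m fcompKV.
case: x y x_a y_b {L_mem R_mu e_th eR e_m} m_S md_T => [[al i] S] [[be j] T].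
move=> /andP [_ /is_cosetP [l [_ _ eS]]] /andP [_ /is_cosetP [r [_ _ eT]]] /=.
rewrite /= in eS eT; rewrite eS eT => m_S md_T.
by rewrite (fcoset_transl m_S) (fcoset_transl md_T).
Qed.

Lemma unprod_tripleK U (z : triple U) : CE_pred (prod_coef a b) z ->
  prod_triple (unprod_triple z).1 (unprod_triple z).2 = z.
Proof.
case: z => [[mu k] R] /andP [/= lt_k R_mu]; rewrite /unprod_triple /=.
have [th -> [inj_th _ eR]] := is_coset_pick R_mu.
have lt_k' : k < size (labels a b mu) by rewrite size_labels.
have := mem_nth ((mu, 0), (mu, 0), set0) lt_k'.
have := index_uniq ((mu, 0), (mu, 0), set0) lt_k' (labels_uniq a b mu).
case: (nth _ _ k) => [[[al i] [be j]] D] index_L /label_repr [_ _ eD e_mu] /=.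
set d := repr D; set l := fcomp th _.
rewrite -{1}(fcompKV d l) prod_triple_normal -?eD //; last by do 2 apply: fcomp_inj.
by rewrite e_mu index_L fcompKV fcompK eR.
Qed.

Lemma prod_triple_map U V (f : U -> V) (x y : triple U) : injective f ->
  prod_triple (x.1, map_cosets f x.2) (y.1, map_cosets f y.2) =
  ((prod_triple x y).1, map_cosets f (prod_triple x y).2).
Proof.
by move=> inj_f; rewrite /prod_triple /= pair_dcoset_map // pair_meet_map // ftrans_map.
Qed.

Definition prod_species U (p : CE a U * CE b U) : CE (prod_coef a b) U :=
  exist _ (prod_triple (val p.1) (val p.2)) (prod_triple_pred (valP p.1) (valP p.2)).

Definition unprod_species U (z : CE (prod_coef a b) U) : CE a U * CE b U :=
  (exist _ (unprod_triple (val z)).1 (proj1 (unprod_triple_pred (valP z))),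
   exist _ (unprod_triple (val z)).2 (proj2 (unprod_triple_pred (valP z)))).

Lemma prod_speciesK U : cancel (@prod_species U) (@unprod_species U).
Proof.
move=> [x y]; have e := prod_tripleK (valP x) (valP y).
by congr (_, _); apply: val_inj; rewrite /= e.
Qed.

Lemma unprod_speciesK U : cancel (@unprod_species U) (@prod_species U).
Proof. by move=> z; apply: val_inj; exact: unprod_tripleK (valP z). Qed.

Lemma prod_species_natural U V (f : U -> V) (fb : bijective f) (p : CE a U * CE b U) :
  prod_species (CE_map fb p.1, CE_map fb p.2) = CE_map fb (prod_species p).
Proof. by apply: val_inj; exact: prod_triple_map (bij_inj fb). Qed.

End Bijection.

Theorem mainTheorem11 (n : nat) (a b : intpartn n -> nat) :
  exists phi : forall U : finType, (CE a U * CE b U)%type -> CE (prod_coef a b) U,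
    (forall U : finType, bijective (phi U)) /\
    (forall (U V : finType) (f : U -> V) (fb : bijective f) (x : (CE a U * CE b U)%type),
        phi V (CE_map fb x.1, CE_map fb x.2) = CE_map fb (phi U x)).
Proof.
exists (@prod_species n a b); split=> [U|U V f fb x]; last exact: prod_species_natural.
by exists (@unprod_species n a b U); [exact: prod_speciesK | exact: unprod_speciesK].
Qed.
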